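(* Let $\lambda\in\Lambda$ be such that $V_O\cap V_\lambda\neq\emptyset$. Then $V_O\cap V_\lambda$ is contained in an affine subspace of $H$ of codimension equal to the genus of the oriented graph $\mathrm{supp}(\lambda)$. In particular, if $V_O\cap V_\lambda$ is a face of codimension one of $V_O$, then $\mathrm{supp}(\lambda)$ is a circuit $C$ and $\lambda=x^C$.
   Context: $G=(V,E)$ is a finite connected graph, possibly with parallel edges and loops; $\mathbb E$ is the set of oriented edges ($e$ and its reverse $\bar e$). Real $1$-chains $x:\mathbb E\to\mathbb R$ satisfy $x_{\bar e}=-x_e$; $\langle x,y\rangle=\sum_{e\in E}x_ey_e$, $q(x)=\langle x,x\rangle$. A flow satisfies $\sum_{e\text{ with tail }v}x_e=0$ at every vertex $v$; $H$ is the space of real flows and $\Lambda$ the lattice of integer flows. $V_\lambda=\{x\in H: q(x-\lambda)\le q(x-\mu)\ \forall\mu\in\Lambda\}$, $O$ the origin. For a flow $x$, $\mathrm{supp}(x)=\{e\in\mathbb E: x_e>0\}$, viewed as an oriented subgraph; its genus is the first Betti number of the underlying graph. A circuit is an orientation of a cycle as a directed cycle (a loop is a circuit of length one). For an oriented subgraph $D$ (containing at most one of $e,\bar e$ per edge), $x^D$ is the $1$-chain with $x^D_e=1$ if $e\in D$, $-1$ if $\bar e\in D$, $0$ otherwise. *)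

From HB Require Import structures.
From mathcomp Require Import all_boot all_order all_algebra.
Set Implicit Arguments. Unset Strict Implicit. Unset Printing Implicit Defensive.
Import Order.TTheory GRing.Theory Num.Theory.
Local Open Scope ring_scope.

(* A finite graph G with vertex set 'I_n and edge set 'I_m (parallel edges and
   loops allowed); each edge e carries a reference orientation src e -> tgt e.
   The oriented edges are the pairs (e, b) : 'I_m * bool, where (e, true) is
   e in its reference orientation and (e, false) is its reverse \bar e.
   A real 1-chain x (with x_{\bar e} = - x_e) is encoded by the row vector
   x : 'rV[R]_m of its values on the reference orientations. *)

Section GraphFlows.
Variables (R : realFieldType) (n m : nat) (src tgt : 'I_m -> 'I_n).

Definition sub_adj (A : pred 'I_m) : rel 'I_n :=
  fun u v => [exists e, A e &&
    (((src e == u) && (tgt e == v)) || ((src e == v) && (tgt e == u)))].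

Definition connected_graph : Prop :=
  forall u v : 'I_n, connect (sub_adj predT) u v.

Definition otail (o : 'I_m * bool) : 'I_n := if o.2 then src o.1 else tgt o.1.
Definition ohead (o : 'I_m * bool) : 'I_n := if o.2 then tgt o.1 else src o.1.

Definition is_flow (x : 'rV[R]_m) : Prop :=
  forall v : 'I_n,
    \sum_(e | src e == v) x 0 e + \sum_(e | tgt e == v) (- x 0 e) = 0.

Definition is_integral (x : 'rV[R]_m) : Prop :=
  forall e, exists z : int, x 0 e = z%:~R.

Definition in_Lambda (x : 'rV[R]_m) : Prop := is_flow x /\ is_integral x.

Definition incidence : 'M[R]_(m, n) :=
  \matrix_(e, v) ((src e == v)%:R - (tgt e == v)%:R).
Definition Hmx : 'M[R]_m := kermx incidence.

Definition dot (x y : 'rV[R]_m) : R := \sum_e x 0 e * y 0 e.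
Definition q (x : 'rV[R]_m) : R := dot x x.

Definition Vcell (lam : 'rV[R]_m) (x : 'rV[R]_m) : Prop :=
  is_flow x /\ forall mu, in_Lambda mu -> q (x - lam) <= q (x - mu).

(* genus (first Betti number) of the underlying graph of supp(x):
   its edges are those e with x_e <> 0 (exactly one of e, \bar e is in supp);
   b1 = #edges - #vertices + #components (isolated vertices cancel). *)
Definition supp_edges (x : 'rV[R]_m) : pred 'I_m := fun e => x 0 e != 0.
Definition genus (x : 'rV[R]_m) : nat :=
  (#|supp_edges x| + n_comp (sub_adj (supp_edges x)) 'I_n - n)%N.

Definition in_supp (x : 'rV[R]_m) (o : 'I_m * bool) : bool :=
  if o.2 then 0 < x 0 o.1 else x 0 o.1 < 0.

Definition is_circuit (C : seq ('I_m * bool)) : Prop :=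
  [/\ (0 < size C)%N, uniq (map fst C), uniq (map otail C)
    & cycle (fun a b => ohead a == otail b) C].

Definition xD (D : seq ('I_m * bool)) : 'rV[R]_m :=
  \row_e (if (e, true) \in D then 1 else if (e, false) \in D then -1 else 0).

Definition in_affine_codim (S : 'rV[R]_m -> Prop) (k : nat) : Prop :=
  exists (a : 'rV[R]_m) (U : 'M[R]_m),
    [/\ (a <= Hmx)%MS, (U <= Hmx)%MS, (\rank U + k)%N = \rank Hmx
      & forall x, S x -> (x - a <= U)%MS].

Definition affine_dim (S : 'rV[R]_m -> Prop) (d : nat) : Prop :=
  (exists (a : 'rV[R]_m) (U : 'M[R]_m),
     (\rank U <= d)%N /\ forall x, S x -> (x - a <= U)%MS) /\
  (exists (p0 : 'rV[R]_m) (P : 'M[R]_(d, m)),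
     [/\ S p0, forall i, S (p0 + row i P) & \rank P = d]).

(* F is a face of the convex set K (faces of polytopes are exposed) *)
Definition is_face (K F : 'rV[R]_m -> Prop) : Prop :=
  exists (f : 'rV[R]_m) (c : R),
    (forall x, K x -> dot f x <= c) /\
    (forall x, F x <-> (K x /\ dot f x = c)).

Definition is_facet (K F : 'rV[R]_m -> Prop) : Prop :=
  is_face K F /\ exists d, affine_dim F d /\ (d + 1)%N = \rank Hmx.

End GraphFlows.

From Pilot Require Import Defs.
From HB Require Import structures.
From mathcomp Require Import all_boot all_order all_algebra.
From mathcomp Require Import zify ring lra.
Import Order.TTheory GRing.Theory Num.Theory.
Local Open Scope ring_scope.

(* Let x0, x lie in V_O and V_lam, and call an integer flow mu a conformal part
   of lam when each mu_e lies between 0 and lam_e.  Then q(mu) + q(lam - mu)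
   <= q(lam), so adding the inequalities 2 <x, nu> <= q(nu) of V_O for nu = mu
   and nu = lam - mu yields 2 <x, lam> <= q(lam), which V_lam makes an
   equality; hence 2 <x, mu> = q(mu), and x - x0 is orthogonal to every
   conformal part.  Every flow supported on supp(lam) is a linear combination
   of chains of directed circuits of supp(lam), which are conformal parts, so
   x - x0 is orthogonal to the space K of such flows, whose dimension is the
   number of edges of supp(lam) minus the rank of its incidence matrix, hence
   at least its genus.  For a facet dim K <= 1: the chain x^C of a circuit C of
   supp(lam) is then a multiple a lam, and 2 <x0, mu> = q(mu) for mu = lam and
   mu = x^C forces a = 1. *)

Set Implicit Arguments.
Unset Strict Implicit.
Unset Printing Implicit Defensive.

Lemma sum_nat_delta (R : nzSemiRingType) (k : nat) (f : 'I_k -> R) (i : 'I_k) :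
  \sum_j (i == j)%:R * f j = f i.
Proof.
rewrite (bigD1 i) //= eqxx mul1r big1 ?addr0 // => j /negbTE ji.
by rewrite eq_sym ji mul0r.
Qed.

Section Flows.
Variables (R : realFieldType) (n m : nat) (src tgt : 'I_m -> 'I_n).
Implicit Types (x y : 'rV[R]_m) (a : R).

Local Notation is_flow := (is_flow src tgt).
Local Notation incidence := (incidence R src tgt).
Local Notation Hmx := (Hmx R src tgt).

Lemma is_flowE x : is_flow x <-> x *m incidence = 0.
Proof.
have outflowE v : \sum_(e | src e == v) x 0 e + \sum_(e | tgt e == v) - x 0 e
    = (x *m incidence) 0 v.
  rewrite mxE (big_mkcond (fun e => src e == v)) (big_mkcond (fun e => tgt e == v)).
  rewrite -big_split /=; apply: eq_bigr => e _.
  by rewrite mxE mulrBr; case: (src e == v); case: (tgt e == v);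
    rewrite ?mulr1 ?mulr0 ?subr0 ?sub0r ?addr0 ?add0r.
split=> [flow_x | /rowP x0 v]; last by rewrite outflowE x0 mxE.
by apply/rowP => v; rewrite -outflowE flow_x mxE.
Qed.

Lemma is_flow_Hmx x : is_flow x <-> (x <= Hmx)%MS.
Proof. by rewrite is_flowE; split => /sub_kermxP. Qed.

Lemma flow0 : is_flow (0 : 'rV[R]_m).
Proof. by apply/is_flow_Hmx; rewrite sub0mx. Qed.

Lemma flowD x y : is_flow x -> is_flow y -> is_flow (x + y).
Proof. by rewrite !is_flow_Hmx; apply: addmx_sub. Qed.

Lemma flowZ a x : is_flow x -> is_flow (a *: x).
Proof. by rewrite !is_flow_Hmx; apply: scalemx_sub. Qed.

Lemma flowB x y : is_flow x -> is_flow y -> is_flow (x - y).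
Proof. by move=> fx fy; rewrite -scaleN1r; apply/flowD/flowZ. Qed.

Lemma flow_cut x (S : pred 'I_n) : is_flow x ->
  \sum_e x 0 e * ((S (src e))%:R - (S (tgt e))%:R) = 0.
Proof.
move=> /is_flowE flow_x; pose chi : 'cV[R]_n := \col_v (S v)%:R.
transitivity ((x *m (incidence *m chi)) 0 0); last by rewrite mulmxA flow_x mul0mx mxE.
rewrite mxE; apply: eq_bigr => e _; congr (_ * _); rewrite mxE.
under eq_bigr do rewrite !mxE mulrBl.
by rewrite sumrB !sum_nat_delta.
Qed.

End Flows.

Section Dot.
Variables (R : realFieldType) (m : nat).
Implicit Types (x y z : 'rV[R]_m) (a : R).
Local Notation dot := (@dot R m).
Local Notation q := (@q R m).

Lemma dotC x y : dot x y = dot y x.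
Proof. by apply: eq_bigr => e _; rewrite mulrC. Qed.

Lemma dotDr x y z : dot x (y + z) = dot x y + dot x z.
Proof. by rewrite /dot -big_split; apply: eq_bigr => e _; rewrite mxE mulrDr. Qed.

Lemma dotZr a x y : dot x (a *: y) = a * dot x y.
Proof. by rewrite /dot mulr_sumr; apply: eq_bigr => e _; rewrite mxE mulrCA. Qed.

Lemma dotNr x y : dot x (- y) = - dot x y.
Proof. by rewrite -scaleN1r dotZr mulN1r. Qed.

Lemma dotBr x y z : dot x (y - z) = dot x y - dot x z.
Proof. by rewrite dotDr dotNr. Qed.

Lemma dotDl x y z : dot (x + y) z = dot x z + dot y z.
Proof. by rewrite dotC dotDr !(dotC z). Qed.

Lemma dotBl x y z : dot (x - y) z = dot x z - dot y z.
Proof. by rewrite dotC dotBr !(dotC z). Qed.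

Lemma dotZl a x y : dot (a *: x) y = a * dot x y.
Proof. by rewrite dotC dotZr dotC. Qed.

Lemma dot_mx x y : dot x y = (x *m y^T) 0 0.
Proof. by rewrite !mxE; apply: eq_bigr => e _; rewrite mxE. Qed.

Lemma qD x y : q (x + y) = q x + 2 * dot x y + q y.
Proof. rewrite /q dotDl !dotDr (dotC y x); ring. Qed.

Lemma qB x y : q (x - y) = q x - 2 * dot x y + q y.
Proof. rewrite /q dotBl !dotBr (dotC y x); ring. Qed.

Lemma q_eq0 x : q x = 0 -> x = 0.
Proof.
move=> /eqP; rewrite psumr_eq0 => [/allP x0|e _]; last by rewrite -expr2 sqr_ge0.
apply/rowP => e; have /implyP := x0 e (mem_index_enum e).
by rewrite mxE mulf_eq0 orbb => /(_ isT)/eqP.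
Qed.

End Dot.

Lemma not_uniq_map_split (T U : eqType) (f : T -> U) (s : seq T) : ~~ uniq (map f s) ->
  exists s1 x s2 y s3, s = s1 ++ x :: s2 ++ y :: s3 /\ f x = f y.
Proof.
elim: s => [|x s IHs] //=; rewrite negb_and negbK => /orP[/mapP[y s_y fxy] | /IHs].
  by case/splitPr: s_y => s2 s3; exists [::], x, s2, y, s3.
by move=> [s1 [x' [s2 [y [s3 [-> fxy]]]]]]; exists (x :: s1), x', s2, y, s3.
Qed.

Section Walks.
Variables (R : realFieldType) (n m : nat) (src tgt : 'I_m -> 'I_n).
Implicit Types (o : 'I_m * bool) (W : seq ('I_m * bool)).

Local Notation otail := (Defs.otail src tgt).
Local Notation ohead := (Defs.ohead src tgt).
Local Notation is_flow := (is_flow src tgt).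
Local Notation incidence := (incidence R src tgt).

Definition sgnb (b : bool) : R := if b then 1 else -1.

Definition ochain o : 'rV[R]_m := \row_e ((o.1 == e)%:R * sgnb o.2).
Definition chain W : 'rV[R]_m := \sum_(o <- W) ochain o.

Fixpoint walk (u : 'I_n) W (w : 'I_n) : bool :=
  if W is o :: W' then (otail o == u) && walk (ohead o) W' w else u == w.

Lemma chain_cons o W : chain (o :: W) = ochain o + chain W.
Proof. exact: big_cons. Qed.

Lemma chain_cat W1 W2 : chain (W1 ++ W2) = chain W1 + chain W2.
Proof. exact: big_cat. Qed.

Lemma chainE W e : chain W 0 e = \sum_(o <- W) (o.1 == e)%:R * sgnb o.2.
Proof. by rewrite summxE; apply: eq_bigr => o _; rewrite mxE. Qed.

Lemma walk_cat u W1 W2 w :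
  walk u (W1 ++ W2) w = [exists t, walk u W1 t && walk t W2 w].
Proof.
elim: W1 u => [|o W1 IHW] u /=.
  apply/idP/existsP => [uW2|[t /andP[/eqP-> //]]]; by exists u; rewrite eqxx.
rewrite IHW; apply/andP/existsP => [[ou /existsP[t tW]] | [t /andP[/andP[ou oW1] W2w]]].
  by exists t; rewrite ou.
by split=> //; apply/existsP; exists t; rewrite oW1.
Qed.

Lemma ochain_incidence o :
  ochain o *m incidence = delta_mx 0 (otail o) - delta_mx 0 (ohead o).
Proof.
apply/rowP => v; rewrite !mxE.
under eq_bigr do rewrite !mxE mulrAC -mulrA.
rewrite sum_nat_delta /Defs.otail /Defs.ohead ![v == _]eq_sym.
by case: o => e [] /=; rewrite /sgnb ?mulr1 ?mulrN1 ?opprB.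
Qed.

Lemma walk_chain_incidence u W w : walk u W w ->
  chain W *m incidence = delta_mx 0 u - delta_mx 0 w.
Proof.
elim: W u => [|o W IHW] u /=; first by move=> /eqP->; rewrite /chain big_nil mul0mx subrr.
move=> /andP[/eqP <- /IHW]; rewrite chain_cons mulmxDl ochain_incidence => ->.
by rewrite addrA subrK.
Qed.

Lemma closed_walk_flow u W : walk u W u -> is_flow (chain W).
Proof. by move=> /walk_chain_incidence uWu; apply/is_flowE; rewrite uWu subrr. Qed.

Lemma closed_walk_split u W : walk u W u -> ~~ uniq (map otail W) ->
  exists t W1 W2, [/\ walk t W1 t, walk u W2 u, perm_eq W (W1 ++ W2),
                     (0 < size W1)%N & (0 < size W2)%N].
Proof.
move=> uWu /not_uniq_map_split[s1 [x [s2 [y [s3 [defW xy]]]]]].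
move: uWu; rewrite defW walk_cat => /existsP[t /andP[us1t /= /andP[/eqP xt]]].
rewrite walk_cat => /existsP[t' /andP[xs2t' /= /andP[/eqP yt' ys3u]]].
exists t, (x :: s2), (s1 ++ y :: s3); split => //.
- by rewrite /= xt eqxx -xt xy yt'.
- by rewrite walk_cat; apply/existsP; exists t; rewrite us1t /= -xt xy yt' eqxx.
- by rewrite -cat_cons perm_catCA.
- by rewrite size_cat addnS.
Qed.

Lemma closed_walk_circuit u W : walk u W u -> (0 < size W)%N ->
  exists t C, [/\ walk t C t, uniq (map otail C), (0 < size C)%N & {subset C <= W}].
Proof.
have [k] := ubnP (size W); elim: k u W => // k IHk u W.
rewrite ltnS => W_k uWu W_gt0.
have [uniqW | /(closed_walk_split uWu)[t [W1 [W2 [tW1t _ eqW W1_gt0 W2_gt0]]]]] :=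
  boolP (uniq (map otail W)); first by exists u, W; split=> // o.
have sizeW : size W = (size W1 + size W2)%N by rewrite (perm_size eqW) size_cat.
have [|t' [C [tCt uniqC C_gt0 CW1]]] := IHk t W1 _ tW1t W1_gt0; first by lia.
exists t', C; split=> // o /CW1 W1o.
by rewrite (perm_mem eqW) mem_cat W1o.
Qed.

End Walks.

Section Support.
Variables (R : realFieldType) (n m : nat) (src tgt : 'I_m -> 'I_n).
Implicit Types (z : 'rV[R]_m) (o : 'I_m * bool) (W : seq ('I_m * bool)).

Local Notation otail := (Defs.otail src tgt).
Local Notation ohead := (Defs.ohead src tgt).
Local Notation walk := (walk src tgt).
Local Notation chain := (@chain R m).

Lemma in_supp_inj z o o' : in_supp z o -> in_supp z o' -> o.1 = o'.1 -> o = o'.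
Proof.
case: o o' => e b [e' b'] /=; rewrite /in_supp /= => + + ee'; rewrite -ee'.
by case: b b' => [] [] // z_pos z_neg; have := lt_trans z_neg z_pos; rewrite ltxx.
Qed.

Lemma in_supp_neq0 z o : in_supp z o -> z 0 o.1 != 0.
Proof.
by case: o => e [] /=; rewrite /in_supp /= => z_o; rewrite ?(gt_eqF z_o) ?(lt_eqF z_o).
Qed.

Lemma in_supp_sign z e : z 0 e != 0 -> in_supp z (e, 0 < z 0 e).
Proof. by rewrite /in_supp /=; case: ltP => // z_le0 z_neq0; rewrite lt_neqAle z_neq0. Qed.

Lemma in_supp_rev z o : z 0 o.1 != 0 -> ~~ in_supp z o -> in_supp z (o.1, ~~ o.2).
Proof.
case: o => e [] /=; rewrite /in_supp /= -leNgt le_eqVlt => z_neq0.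
  by rewrite (negbTE z_neq0).
by rewrite eq_sym (negbTE z_neq0).
Qed.

Lemma ochain_rev o : ochain R (o.1, ~~ o.2) = - ochain R o.
Proof. by apply/rowP => e; rewrite !mxE /=; case: o.2; rewrite /sgnb /= ?mulrN ?opprK. Qed.

Lemma otail_rev o : otail (o.1, ~~ o.2) = ohead o.
Proof. by case: o => e []. Qed.

Lemma ohead_rev o : ohead (o.1, ~~ o.2) = otail o.
Proof. by case: o => e []. Qed.

Lemma chain_count W e b : (forall o, o \in W -> o.1 = e -> o.2 = b) ->
  chain W 0 e = (count (fun o => o.1 == e) W)%:R * sgnb R b.
Proof.
elim: W => [|o W IHW] W_b; first by rewrite /chain big_nil mxE mul0r.
rewrite chain_cons mxE IHW => [|o' W_o']; last by apply: W_b; rewrite inE W_o' orbT.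
rewrite mxE /= natrD mulrDl; case: eqP => [oe|]; last by rewrite !mul0r.
by rewrite (W_b o (mem_head _ _) oe).
Qed.

Lemma chain_uniq_supp z W : uniq W -> all (in_supp z) W -> forall e,
  chain W 0 e = ((e, 0 < z 0 e) \in W)%:R * sgnb R (0 < z 0 e).
Proof.
move=> uniqW /allP suppW e.
have W_e o : o \in W -> o.1 = e -> o = (e, 0 < z 0 e).
  move=> /suppW z_o oe; apply: (in_supp_inj z_o) => //.
  by apply: in_supp_sign; rewrite -oe; apply: in_supp_neq0.
rewrite (@chain_count W e (0 < z 0 e)) => [|o /W_e W_o /W_o -> //].
congr (_%:R * _); rewrite -(count_uniq_mem _ uniqW); apply: eq_in_count => o W_o /=.
by apply/eqP/eqP => [/(W_e _ W_o) | ->].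
Qed.

Definition supp_step z : rel 'I_n :=
  fun u v => [exists o, [&& in_supp z o, otail o == u & ohead o == v]].

Lemma supp_path_walk z u p : path (supp_step z) u p ->
  exists W, walk u W (last u p) && all (in_supp z) W.
Proof.
elim: p u => [|v p IHp] u /=; first by exists [::]; rewrite /= eqxx.
move=> /andP[/existsP[o /and3P[z_o /eqP ou /eqP ov]] /IHp[W /andP[vW z_W]]].
by exists (o :: W); rewrite /= ou ov eqxx vW z_o z_W.
Qed.

(* If the head of o could not reach back to its tail, the set S of vertices
   reachable from the head would be left by no oriented edge of supp z, and the
   cut through S would carry a nonzero net flow. *)
Lemma flow_return_walk z o : is_flow src tgt z -> in_supp z o ->
  exists W, walk (ohead o) W (otail o) && all (in_supp z) W.
Proof.
move=> flow_z z_o.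
have [/connectP[p p_path ->] | unreach] := boolP (connect (supp_step z) (ohead o) (otail o)).
  exact: supp_path_walk p_path.
pose S := connect (supp_step z) (ohead o).
have S_closed o' : in_supp z o' -> S (otail o') -> S (ohead o').
  move=> z_o' S_o'; apply: connect_trans S_o' (connect1 _).
  by apply/existsP; exists o'; rewrite z_o' !eqxx.
have cut_le0 e : z 0 e * ((S (src e))%:R - (S (tgt e))%:R) <= 0.
  rewrite /in_supp /Defs.otail /Defs.ohead /= in S_closed.
  case S_src: (S (src e)); case S_tgt: (S (tgt e)); rewrite /= ?subrr ?mulr0 //.
    rewrite subr0 mulr1 leNgt; apply/negP => z_pos.
    by have := S_closed (e, true); rewrite /= z_pos S_src S_tgt => /(_ isT isT).
  rewrite sub0r mulrN1 oppr_le0 leNgt; apply/negP => z_neg.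
  by have := S_closed (e, false); rewrite /= z_neg S_src S_tgt => /(_ isT isT).
have cut_lt0 : z 0 o.1 * ((S (src o.1))%:R - (S (tgt o.1))%:R) < 0.
  have S_head : S (ohead o) := connect0 _ _.
  move: z_o S_head unreach; rewrite /in_supp /Defs.otail /Defs.ohead -/S.
  case: o.2 => z_o -> /negbTE ->; first by rewrite sub0r mulrN1 oppr_lt0.
  by rewrite subr0 mulr1.
have := flow_cut S flow_z; rewrite (bigD1 o.1) //= => /eqP; rewrite lt_eqF //.
by have := ltr_leD cut_lt0 (sumr_le0 _ (fun e _ => cut_le0 e)); rewrite addr0.
Qed.

End Support.

Section Circuits.
Variables (R : realFieldType) (n m : nat) (src tgt : 'I_m -> 'I_n).
Implicit Types (z : 'rV[R]_m) (o : 'I_m * bool) (C : seq ('I_m * bool)).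

Local Notation otail := (Defs.otail src tgt).
Local Notation ohead := (Defs.ohead src tgt).
Local Notation walk := (walk src tgt).
Local Notation chain := (@chain R m).

Lemma flow_circuit z : is_flow src tgt z -> z != 0 ->
  exists u C, [/\ walk u C u, uniq (map otail C), all (in_supp z) C & (0 < size C)%N].
Proof.
move=> flow_z z_neq0; have [f z_f] : exists f, z 0 f != 0.
  apply/existsP; apply: contraNT z_neq0 => /existsPn z0.
  by apply/eqP/rowP => e; rewrite mxE; apply/eqP/negbNE.
have z_o := in_supp_sign z_f; set o := (f, _) in z_o.
have [Q /andP[back suppQ]] := flow_return_walk flow_z z_o.
have oQo : walk (otail o) (o :: Q) (otail o) by rewrite /= eqxx.
have [u [C [uCu uniqC C_gt0 CW]]] := closed_walk_circuit oQo isT.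
exists u, C; split=> //; apply/allP => o' /CW; rewrite inE => /predU1P[->|/(allP suppQ)] //.
Qed.

Lemma is_circuit_closed_walk z u C : walk u C u -> uniq (map otail C) ->
  all (in_supp z) C -> (0 < size C)%N -> is_circuit src tgt C.
Proof.
move=> uCu uniq_tails suppC C_gt0; split=> //.
  rewrite map_inj_in_uniq ?(map_uniq uniq_tails) // => o o' C_o C_o'.
  exact: in_supp_inj (allP suppC o C_o) (allP suppC o' C_o').
case: C C_gt0 uCu {uniq_tails suppC} => // o C _ /= /andP[/eqP ou].
rewrite /cycle rcons_path ou; clear ou; elim: C o => [|o' C IHC] o //=.
by move=> /andP[/eqP <- /IHC]; rewrite eqxx.
Qed.

Lemma mem_supp_sign z C e b : all (in_supp z) C -> (e, b) \in C -> b = (0 < z 0 e).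
Proof.
move=> /allP suppC /suppC z_o.
by case: (in_supp_inj z_o (in_supp_sign (in_supp_neq0 z_o)) erefl).
Qed.

Lemma in_supp_chain z C : uniq C -> all (in_supp z) C ->
  forall o, in_supp (chain C) o = (o \in C).
Proof.
move=> uniqC suppC [e b]; rewrite /in_supp /= (chain_uniq_supp uniqC suppC).
have -> : ((e, b) \in C) = (b == (0 < z 0 e)) && ((e, 0 < z 0 e) \in C).
  by apply/idP/andP => [C_o | [/eqP-> //]]; rewrite -(mem_supp_sign suppC C_o).
case: (_ \in C) => /=; last by rewrite andbF mul0r ltxx; case: b.
rewrite mul1r andbT /sgnb.
by case: b; case: (0 < z 0 e); rewrite /= ?ltr01 ?oppr_gt0 ?oppr_lt0 ?ltr10 ?ltr01.
Qed.

Lemma chain_mem_neq0 z C o : uniq C -> all (in_supp z) C -> o \in C ->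
  chain C 0 o.1 != 0.
Proof.
by move=> uniqC suppC C_o; apply: (in_supp_neq0 (o := o)); rewrite (in_supp_chain uniqC suppC).
Qed.

Lemma chain_supp z C : uniq C -> all (in_supp z) C ->
  forall e, z 0 e = 0 -> chain C 0 e = 0.
Proof.
move=> uniqC suppC e z_e; apply/eqP/negP => /negP/in_supp_sign.
by rewrite (in_supp_chain uniqC suppC) => /(allP suppC)/in_supp_neq0; rewrite z_e eqxx.
Qed.

Lemma chain_xD z C : uniq C -> all (in_supp z) C -> chain C = xD R C.
Proof.
move=> uniqC suppC; apply/rowP => e; rewrite (chain_uniq_supp uniqC suppC) mxE.
have := @mem_supp_sign z C e true suppC; have := @mem_supp_sign z C e false suppC.
case: (0 < z 0 e); case: ((e, true) \in C); case: ((e, false) \in C) => //= C_f C_t;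
  rewrite /sgnb ?mul1r ?mul0r //; by [have := C_f isT | have := C_t isT].
Qed.

End Circuits.

Lemma intr_ge1 (R : numDomainType) (v : R) : (exists k : int, v = k%:~R) -> 0 < v -> 1 <= v.
Proof. by move=> [k ->]; rewrite ltr0z ler1z. Qed.

Lemma intr_leN1 (R : numDomainType) (v : R) : (exists k : int, v = k%:~R) -> v < 0 -> v <= -1.
Proof. by move=> [k ->]; rewrite -[-1]/((-1)%:~R) ltrz0 ler_int -ltzD1 addNr. Qed.

Section ConformalSpan.
Variables (R : realFieldType) (n m : nat) (src tgt : 'I_m -> 'I_n).
Implicit Types (y mu : 'rV[R]_m) (o : 'I_m * bool) (W : seq ('I_m * bool)).

Local Notation otail := (Defs.otail src tgt).
Local Notation ohead := (Defs.ohead src tgt).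
Local Notation walk := (walk src tgt).
Local Notation chain := (@chain R m).
Local Notation is_flow := (is_flow src tgt).
Local Notation in_Lambda := (in_Lambda src tgt).

Definition conformal_part (lam mu : 'rV[R]_m) :=
  in_Lambda mu /\ forall e, 0 <= mu 0 e * (lam 0 e - mu 0 e).

Variable lam : 'rV[R]_m.
Hypothesis lam_Lambda : in_Lambda lam.

Lemma circuit_conformal_part u C : walk u C u -> uniq (map otail C) ->
  all (in_supp lam) C -> conformal_part lam (chain C).
Proof.
move=> uCu uniq_tails suppC; have uniqC := map_uniq uniq_tails.
have chainE := chain_uniq_supp uniqC suppC.
split; first split.
- exact: closed_walk_flow uCu.
- move=> e; rewrite chainE.
  case: (_ \in C); case: (0 < lam 0 e); rewrite /sgnb ?mul1r ?mul0r.
  + by exists 1.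
  + by exists (-1).
  + by exists 0.
  + by exists 0.
move=> e; rewrite chainE; case C_e: (_ \in C); last by rewrite !mul0r.
have := allP suppC _ C_e; have lam_int := lam_Lambda.2 e.
rewrite /in_supp /=; case: ifP => _ lam_e; rewrite /sgnb mul1r.
  by rewrite mul1r subr_ge0 intr_ge1.
by rewrite mulN1r oppr_ge0 subr_le0 intr_leN1.
Qed.

Variable U : 'M[R]_m.
Hypothesis conformal_sub : forall mu, conformal_part lam mu -> (mu <= U)%MS.

Lemma closed_supp_walk_chain_sub u W : walk u W u -> all (in_supp lam) W ->
  (chain W <= U)%MS.
Proof.
have [k] := ubnP (size W); elim: k u W => // k IHk u W.
rewrite ltnS => W_k uWu suppW.
have [uniq_tails | /(closed_walk_split uWu)[t [W1 [W2 [tW1t uW2u eqW W1_gt0 W2_gt0]]]]] :=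
  boolP (uniq (map otail W)).
  exact/conformal_sub/(circuit_conformal_part uWu).
have sizeW : size W = (size W1 + size W2)%N by rewrite (perm_size eqW) size_cat.
have suppW12 : all (in_supp lam) (W1 ++ W2) by rewrite -(perm_all _ eqW).
rewrite all_cat in suppW12; case/andP: suppW12 => suppW1 suppW2.
have -> : chain W = chain W1 + chain W2 by rewrite -chain_cat; apply: perm_big.
by apply: addmx_sub; [apply: (IHk t) | apply: (IHk u)] => //; lia.
Qed.

(* An edge traversed against the orientation of lam is replaced by its reverse
   followed by a return walk inside supp lam. *)
Lemma closed_walk_chain_sub u W : walk u W u -> all (fun o => lam 0 o.1 != 0) W ->
  (chain W <= U)%MS.
Proof.
have [k] := ubnP (count (predC (in_supp lam)) W); elim: k u W => // k IHk u W.
rewrite ltnS => W_k uWu lamW.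
have [suppW | /allPn[o W_o o_wrong]] := boolP (all (in_supp lam) W).
  exact: closed_supp_walk_chain_sub uWu suppW.
case/splitPr: W_o W_k uWu lamW => W1 W2 W_k uWu lamW.
move: uWu; rewrite walk_cat => /existsP[t /andP[uW1t /= /andP[/eqP ot oW2u]]].
move: lamW; rewrite all_cat /= => /and3P[lamW1 lam_o lamW2].
have rev_supp := in_supp_rev lam_o o_wrong.
have [Q /andP[back suppQ]] := flow_return_walk lam_Lambda.1 rev_supp.
rewrite otail_rev ohead_rev in back.
have cycle_sub : (chain ((o.1, ~~ o.2) :: Q) <= U)%MS.
  apply: (closed_supp_walk_chain_sub (u := ohead o)); last by rewrite /= rev_supp suppQ.
  by rewrite /= otail_rev eqxx ohead_rev.
have countQ : count (predC (in_supp lam)) Q = 0%N.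
  by apply/eqP; rewrite -leqn0 leqNgt -has_count has_predC negbK.
have detour_sub : (chain (W1 ++ Q ++ W2) <= U)%MS.
  apply: (IHk u).
  - by move: W_k; rewrite !count_cat /= countQ (negbTE o_wrong) add0n addnCA.
  - rewrite walk_cat; apply/existsP; exists t; rewrite uW1t walk_cat /=.
    by apply/existsP; exists (ohead o); rewrite -ot back.
  - rewrite !all_cat lamW1 lamW2 andbT /=; apply/allP => o' /(allP suppQ).
    exact: in_supp_neq0.
have -> : chain (W1 ++ o :: W2) = chain (W1 ++ Q ++ W2) - chain ((o.1, ~~ o.2) :: Q).
  apply/eqP; rewrite eq_sym subr_eq !chain_cat !chain_cons ochain_rev -!addrA.
  by apply/eqP; congr (_ + _); rewrite addrCA addNKr addrC.
by apply: addmx_sub; rewrite ?eqmx_opp.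
Qed.

(* Subtracting a multiple of the chain of a circuit of supp y kills one more
   coordinate of y. *)
Lemma flow_on_supp_sub y : is_flow y -> (forall e, lam 0 e = 0 -> y 0 e = 0) ->
  (y <= U)%MS.
Proof.
have [k] := ubnP #|[pred e | y 0 e != 0]|; elim: k y => // k IHk y.
rewrite ltnS => y_k flow_y y_lam.
have [-> | y_neq0] := eqVneq y 0; first by rewrite sub0mx.
have [u [C [uCu uniq_tails suppC C_gt0]]] := flow_circuit flow_y y_neq0.
have uniqC := map_uniq uniq_tails; have chainC_supp := chain_supp uniqC suppC.
have /hasP[[f b] C_fb _] : has predT C by rewrite has_predT.
have y_f : y 0 f != 0 := in_supp_neq0 (allP suppC _ C_fb).
have chainC_f : chain C 0 f != 0 := chain_mem_neq0 uniqC suppC C_fb.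
have chainC_sub : (chain C <= U)%MS.
  apply: (closed_walk_chain_sub uCu); apply/allP => o /(allP suppC)/in_supp_neq0.
  by apply: contra => /eqP/y_lam->.
set t := y 0 f / chain C 0 f; set y' := y - t *: chain C.
have y'_supp e : y 0 e = 0 -> y' 0 e = 0.
  by move=> y_e; rewrite !mxE y_e chainC_supp // mulr0 subr0.
have y'_sub : (y' <= U)%MS.
  apply: IHk => [||e /y_lam/y'_supp //]; last exact/flowB/flowZ/closed_walk_flow/uCu.
  move: y_k; rewrite (cardD1 f) inE y_f add1n; apply: leq_ltn_trans.
  apply: subset_leq_card; apply/subsetP => e; rewrite !inE.
  have [->|_] := eqVneq e f; first by rewrite !mxE divfK // subrr eqxx.
  by apply: contraNN => /eqP/y'_supp->.
have -> : y = y' + t *: chain C by rewrite subrK.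
by apply: addmx_sub => //; apply: scalemx_sub.
Qed.

End ConformalSpan.

Section Voronoi.
Variables (R : realFieldType) (n m : nat) (src tgt : 'I_m -> 'I_n).
Implicit Types (x mu lam : 'rV[R]_m).

Local Notation dot := (@Defs.dot R m).
Local Notation q := (@Defs.q R m).
Local Notation Vcell := (Vcell src tgt).
Local Notation in_Lambda := (in_Lambda src tgt).
Local Notation conformal_part := (conformal_part src tgt).

Lemma Lambda0 : in_Lambda (0 : 'rV[R]_m).
Proof. by split; [exact: flow0 | exists 0; rewrite mxE]. Qed.

Lemma LambdaB lam mu : in_Lambda lam -> in_Lambda mu -> in_Lambda (lam - mu).
Proof.
move=> [flow_lam int_lam] [flow_mu int_mu]; split; first exact: flowB.
move=> e; rewrite !mxE; have [k ->] := int_lam e; have [l ->] := int_mu e.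
by exists (k - l); rewrite rmorphB.
Qed.

Lemma V0_dot_le x mu : Vcell 0 x -> in_Lambda mu -> 2 * dot x mu <= q mu.
Proof. by move=> [_ V0x] /V0x; rewrite subr0 qB -addrA lerDl addrC subr_ge0. Qed.

Lemma VV_dot_lam x lam : Vcell 0 x -> Vcell lam x -> in_Lambda lam ->
  2 * dot x lam = q lam.
Proof.
move=> V0x [_ Vlam_x] lam_Lambda; apply/eqP; rewrite eq_le V0_dot_le //=.
by have := Vlam_x 0 Lambda0; rewrite subr0 qB -addrA gerDl addrC subr_le0.
Qed.

(* Splitting lam = mu + (lam - mu) into conformal parts makes both
   inequalities 2 <x, .> <= q(.) tight at once. *)
Lemma VV_dot_conformal x lam mu : in_Lambda lam -> Vcell 0 x -> Vcell lam x ->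
  conformal_part lam mu -> 2 * dot x mu = q mu.
Proof.
move=> lam_Lambda V0x Vlam_x [mu_Lambda mu_conf].
apply/eqP; rewrite eq_le V0_dot_le //=.
have rest_le := V0_dot_le V0x (LambdaB lam_Lambda mu_Lambda).
have cross_ge0 : 0 <= dot mu (lam - mu) by apply: sumr_ge0 => e _; rewrite !mxE.
have dot_split : dot x lam = dot x mu + dot x (lam - mu) by rewrite -dotDr addrC subrK.
have q_split : q lam = q mu + 2 * dot mu (lam - mu) + q (lam - mu).
  by rewrite -qD addrC subrK.
have := VV_dot_lam V0x Vlam_x lam_Lambda; rewrite dot_split q_split; lra.
Qed.

Lemma box_V0 x : is_flow src tgt x -> (forall e, 2 * `|x 0 e| <= 1) -> Vcell 0 x.
Proof.
move=> flow_x x_small; split => // mu [_ mu_int]; rewrite subr0 qB -addrA lerDl addrC.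
rewrite /q /dot mulr_sumr -sumrB; apply: sumr_ge0 => e _.
have /andP[x_ge x_le] : -1 <= 2 * x 0 e <= 1.
  by rewrite -ler_norml normrM normr_nat x_small.
have [mu_gt0 | mu_lt0 | ->] := ltrgt0P (mu 0 e); last by lra.
  by have := intr_ge1 (mu_int e) mu_gt0; nra.
by have := intr_leN1 (mu_int e) mu_lt0; nra.
Qed.

Lemma V0_affine_span (a : 'rV[R]_m) (U : 'M[R]_m) :
  (forall x, Vcell 0 x -> (x - a <= U)%MS) -> (Hmx R src tgt <= U)%MS.
Proof.
move=> V0_sub; have box_sub x : is_flow src tgt x -> (forall e, 2 * `|x 0 e| <= 1) ->
    (x <= U)%MS.
  move=> flow_x x_small; rewrite -(subrK a x); apply: addmx_sub; first exact/V0_sub/box_V0.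
  rewrite -(eqmx_opp a) -sub0r; apply/V0_sub/box_V0; first exact: flow0.
  by move=> e; rewrite mxE normr0 mulr0 ler01.
apply/row_subP => i; have flow_h : is_flow src tgt (row i (Hmx R src tgt)).
  by apply/is_flow_Hmx; apply: row_sub.
move: (row i _) flow_h => h flow_h; set s := \sum_e `|h 0 e|.
have s_ge0 : 0 <= s by apply: sumr_ge0 => e _.
have h_le e : `|h 0 e| <= s by rewrite /s (bigD1 e) //= lerDl sumr_ge0.
have t_gt0 : 0 < (2 * (1 + s))^-1 by rewrite invr_gt0; lra.
suff /(scalemx_sub (2 * (1 + s))) : ((2 * (1 + s))^-1 *: h <= U)%MS.
  by rewrite scalerA mulfV ?scale1r // gt_eqF //; lra.
apply: box_sub; first exact: flowZ.
move=> e; rewrite mxE normrM gtr0_norm //.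
have -> : 2 * ((2 * (1 + s))^-1 * `|h 0 e|) = `|h 0 e| / (1 + s).
  by field; apply/lt0r_neq0; lra.
by rewrite ler_pdivrMr ?mul1r ?ler_wpDl //; lra.
Qed.

End Voronoi.

Lemma card_le_mxrank (F : fieldType) (p N : nat) (B : 'M[F]_(p, N)) (S : {pred 'I_p})
    (sel : 'I_p -> 'I_N) :
  {in S &, forall i j, B i (sel j) = (i == j)%:R} -> (#|S| <= \rank B)%N.
Proof.
move=> B_sel; pose W := \matrix_(i < #|S|) row (enum_val i) B.
pose T := \matrix_(j < N, k < #|S|) (j == sel (enum_val k))%:R : 'M[F]_(N, #|S|).
have WT1 : W *m T = 1%:M.
  apply/matrixP => i k; rewrite !mxE (bigD1 (sel (enum_val k))) //= big1 ?addr0.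
    by rewrite !mxE eqxx mulr1 B_sel ?enum_valP // (inj_eq enum_val_inj).
  by move=> j /negbTE j_sel; rewrite !mxE j_sel mulr0.
have := mxrankM_maxl W T; rewrite WT1 mxrank1 => /leq_trans; apply.
by apply: mxrankS; apply/row_subP => i; rewrite rowK row_sub.
Qed.

Section SuppFlows.
Variables (R : realFieldType) (n m : nat) (src tgt : 'I_m -> 'I_n) (lam : 'rV[R]_m).
Implicit Types (y : 'rV[R]_m).

Local Notation is_flow := (is_flow src tgt).
Local Notation incidence := (incidence R src tgt).
Local Notation Hmx := (Hmx R src tgt).

Definition supp_diag : 'M[R]_m := diag_mx (\row_e (lam 0 e != 0)%:R).

Definition Kmx : 'M[R]_m := (Hmx :&: supp_diag)%MS.

Lemma mul_supp_diag y : (forall e, lam 0 e = 0 -> y 0 e = 0) -> y *m supp_diag = y.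
Proof.
move=> y_supp; apply/rowP => e; rewrite mul_mx_diag !mxE.
by have [/y_supp->|_] := eqVneq (lam 0 e) 0; rewrite ?mul0r ?mulr1.
Qed.

Lemma sub_supp_diag y : (y <= supp_diag)%MS <-> forall e, lam 0 e = 0 -> y 0 e = 0.
Proof.
split=> [/submxP[w ->] e lam_e | /mul_supp_diag <-]; last exact: submxMl.
by rewrite mul_mx_diag !mxE lam_e eqxx mulr0.
Qed.

Lemma sub_Kmx y : (y <= Kmx)%MS <-> is_flow y /\ forall e, lam 0 e = 0 -> y 0 e = 0.
Proof. by rewrite sub_capmx is_flow_Hmx -sub_supp_diag; split => /andP. Qed.

Local Notation supp_adj := (sub_adj src tgt (supp_edges lam)).

Lemma supp_adj_sym : connect_sym supp_adj.
Proof.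
by apply: sym_connect_sym => u v; apply/existsP/existsP => -[e e_uv]; exists e; rewrite orbC.
Qed.

(* A function constant on the components of supp lam is killed by the restricted
   incidence matrix; the indicators of the components are independent. *)
Lemma rank_supp_incidence :
  (\rank (supp_diag *m incidence) + n_comp supp_adj 'I_n <= n)%N.
Proof.
pose B := \matrix_(u < n, v < n) (fingraph.root supp_adj v == u)%:R : 'M[R]_n.
have ncomp_rank : (n_comp supp_adj 'I_n <= \rank B)%N.
  have -> : n_comp supp_adj 'I_n = #|roots supp_adj|.
    by apply: eq_card => v; rewrite !inE andbT.
  by apply: (card_le_mxrank (sel := id)) => i j _ /eqP j_root; rewrite mxE j_root eq_sym.
have B_ker : (B <= kermx (supp_diag *m incidence)^T)%MS.
  apply/sub_kermxP/matrixP => u e; rewrite mul_diag_mx !mxE.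
  under eq_bigr do rewrite !mxE mulrA mulrBr.
  have [lam_e | lam_e] := eqVneq (lam 0 e) 0.
    by rewrite big1 // => v _; rewrite /= mulr0 !mul0r subrr.
  have same_root : fingraph.root supp_adj (src e) = fingraph.root supp_adj (tgt e).
    apply/eqP; rewrite (root_connect supp_adj_sym); apply: connect1; apply/existsP.
    by exists e; rewrite /supp_edges lam_e !eqxx.
  under eq_bigr do rewrite /= mulr1 ![(_ == u)%:R * _]mulrC.
  by rewrite sumrB !sum_nat_delta same_root subrr.
have := mxrankS B_ker; rewrite mxrank_ker mxrank_tr => B_rank.
have := rank_leq_col (supp_diag *m incidence); lia.
Qed.

Lemma genus_le_rank_Kmx : (genus src tgt lam <= \rank Kmx)%N.
Proof.
have supp_rank : (#|supp_edges lam| <= \rank supp_diag)%N.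
  apply: (card_le_mxrank (sel := id)) => i j i_supp _.
  by rewrite !mxE; move: i_supp; rewrite unfold_in => ->.
have ker_sub : (kermx (supp_diag *m incidence) :&: supp_diag <= Kmx)%MS.
  apply/row_subP => i; have := row_sub i (kermx (supp_diag *m incidence) :&: supp_diag)%MS.
  move: (row i _) => y; rewrite sub_capmx => /andP[/sub_kermxP y_ker /sub_supp_diag y_supp].
  by apply/sub_Kmx; split=> //; apply/is_flowE; rewrite -(mul_supp_diag y_supp) -mulmxA.
have := mxrank_sum_cap (kermx (supp_diag *m incidence)) supp_diag.
rewrite mxrank_ker /genus.
have := rank_leq_col (kermx (supp_diag *m incidence) + supp_diag)%MS.
have := rank_leq_row (supp_diag *m incidence); have := mxrankS ker_sub.
have := rank_supp_incidence; lia.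
Qed.

End SuppFlows.

Lemma submx_rank_between (F : fieldType) (N k : nat) (U0 H : 'M[F]_N) :
  (U0 <= H)%MS -> (\rank U0 + k <= \rank H)%N ->
  exists2 U : 'M[F]_N, (U0 <= U <= H)%MS & \rank U = (\rank U0 + k)%N.
Proof.
move=> U0H; elim: k => [_ | k IHk k_lt]; first by exists U0; rewrite ?submx_refl ?addn0.
have [|U /andP[U0U UH] rankU] := IHk; first lia.
have /row_subPn[i U_i] : ~~ (H <= U)%MS.
  by apply: contraTN k_lt => /mxrankS; rewrite -ltnNge rankU addnS ltnS.
exists (U + row i H)%MS.
  by rewrite (submx_trans U0U (addsmxSl _ _)) addsmx_sub UH row_sub.
have U_lt : (U < U + row i H)%MS.
  by rewrite ltmxE addsmxSl (contra (submx_trans (addsmxSr _ _))).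
have := (mxrank_adds_leqif U (row i H)).1; rewrite ltmxErank addsmxSl /= in U_lt.
by have := rank_leq_row (row i H); lia.
Qed.

Section Cells.
Variables (R : realFieldType) (n m : nat) (src tgt : 'I_m -> 'I_n) (lam : 'rV[R]_m).
Hypothesis lam_Lambda : in_Lambda src tgt lam.
Implicit Types (x : 'rV[R]_m).

Local Notation Hmx := (Hmx R src tgt).
Local Notation Kmx := (Kmx src tgt lam).
Local Notation VV x := (Vcell src tgt 0 x /\ Vcell src tgt lam x).

Definition orth_Kmx : 'M[R]_m := (Hmx :&: kermx Kmx^T)%MS.

Lemma Kmx_sub_conformal_span (U : 'M[R]_m) :
  (forall mu, conformal_part src tgt lam mu -> (mu <= U)%MS) -> (Kmx <= U)%MS.
Proof.
move=> conformal_sub; apply/row_subP => i; have /sub_Kmx[flow_y y_supp] := row_sub i Kmx.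
exact: (flow_on_supp_sub lam_Lambda conformal_sub flow_y y_supp).
Qed.

Lemma VV_sub_orth_Kmx x x0 : VV x -> VV x0 -> (x - x0 <= orth_Kmx)%MS.
Proof.
move=> [V0x Vlam_x] [V0x0 Vlam_x0].
have K_ker : (Kmx <= kermx (x - x0)^T)%MS.
  apply: Kmx_sub_conformal_span => mu mu_conf; apply/sub_kermxP/rowP => j.
  rewrite ord1 -dot_mx !mxE dotC dotBl; apply/eqP; rewrite subr_eq0; apply/eqP.
  apply: (@mulfI _ 2); first by rewrite pnatr_eq0.
  by rewrite !(VV_dot_conformal lam_Lambda _ _ mu_conf).
rewrite sub_capmx; apply/andP; split; first exact/is_flow_Hmx/flowB/V0x0.1/V0x.1.
apply/sub_kermxP; move/sub_kermxP: K_ker => /(congr1 trmx).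
by rewrite trmx_mul trmxK trmx0.
Qed.

Lemma rank_orth_Kmx : (\rank orth_Kmx + \rank Kmx <= \rank Hmx)%N.
Proof.
have orth_cap : (orth_Kmx :&: Kmx)%MS = 0.
  apply/eqP; rewrite -submx0; apply/row_subP => i.
  move: (row i _) (row_sub i (orth_Kmx :&: Kmx)%MS) => y y_cap.
  have /submxP[w y_w] := submx_trans y_cap (capmxSr orth_Kmx Kmx).
  have := submx_trans y_cap (capmxSl orth_Kmx Kmx).
  rewrite sub_capmx => /andP[_ /sub_kermxP y_orth].
  suff /q_eq0-> : q y = 0 by rewrite sub0mx.
  by rewrite /q dot_mx {2}y_w trmx_mul mulmxA y_orth mul0mx mxE.
rewrite -mxrank_disjoint_sum ?orth_cap ?submx_refl //; apply: mxrankS.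
by rewrite addsmx_sub capmxSl capmxSl.
Qed.

Lemma facet_lam_neq0 : is_facet src tgt (Vcell src tgt 0) (fun x => VV x) -> lam != 0.
Proof.
move=> [_ [d [[[a [U [rankU VV_sub]]] _] d_rank]]]; apply/eqP => lam0.
have Hmx_sub : (Hmx <= U)%MS.
  by apply: (V0_affine_span (a := a)) => x V0x; apply: VV_sub; rewrite lam0.
by have := mxrankS Hmx_sub; lia.
Qed.

Lemma facet_rank_Kmx x0 : VV x0 ->
  is_facet src tgt (Vcell src tgt 0) (fun x => VV x) -> (\rank Kmx <= 1)%N.
Proof.
move=> VVx0 [_ [d [[_ [p0 [P [VVp0 VVP rankP]]]] d_rank]]].
have P_orth : (P <= orth_Kmx)%MS.
  apply/row_subP => i.
  have -> : row i P = (p0 + row i P - x0) - (p0 - x0).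
    by rewrite opprB addrA subrK addrC addKr.
  by apply: addmx_sub; rewrite ?eqmx_opp; apply: VV_sub_orth_Kmx.
by have := mxrankS P_orth; have := rank_orth_Kmx; lia.
Qed.

Lemma rank_Kmx_le1_circuit x0 : VV x0 -> lam != 0 -> (\rank Kmx <= 1)%N ->
  exists u C, [/\ walk src tgt u C u, uniq (map (otail src tgt) C),
                  all (in_supp lam) C, (0 < size C)%N & lam = chain R C].
Proof.
move=> [V0x0 Vlam_x0] lam_neq0 rank_K.
have [u [C [uCu uniq_tails suppC C_gt0]]] := flow_circuit lam_Lambda.1 lam_neq0.
exists u, C; split=> //; have uniqC := map_uniq uniq_tails.
have chainC_K : (chain R C <= Kmx)%MS.
  by apply/sub_Kmx; split; [exact: closed_walk_flow uCu | exact: chain_supp].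
have lam_K : (lam <= Kmx)%MS by apply/sub_Kmx; split=> [|e ->]; [exact: lam_Lambda.1 |].
have K_lam : (Kmx <= lam)%MS.
  have /leqifP := mxrank_leqif_eq lam_K; rewrite rank_rV lam_neq0.
  by case: ifP => [/andP[] //|]; lia.
have [a chainC_a] := sub_rVP (submx_trans chainC_K K_lam).
have chainC_neq0 : chain R C != 0.
  have /hasP[o C_o _] : has predT C by rewrite has_predT.
  by apply: contraNneq (chain_mem_neq0 uniqC suppC C_o) => ->; rewrite mxE.
have a_neq0 : a != 0 by apply: contraNneq chainC_neq0 => a0; rewrite chainC_a a0 scale0r.
have dot_lam := VV_dot_lam V0x0 Vlam_x0 lam_Lambda.
have d_neq0 : 2 * dot x0 lam != 0.
  by rewrite dot_lam; apply: contra lam_neq0 => /eqP/q_eq0->.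
have conf_C := circuit_conformal_part lam_Lambda uCu uniq_tails suppC.
have := VV_dot_conformal lam_Lambda V0x0 Vlam_x0 conf_C.
rewrite chainC_a dotZr /q dotZl dotZr -/(q lam) -dot_lam mulrCA => /(mulfI a_neq0)/eqP.
rewrite -subr_eq0 -{1}[2 * dot x0 lam]mul1r -mulrBl mulf_eq0 (negbTE d_neq0) orbF subr_eq0.
by move=> /eqP <-; rewrite scale1r.
Qed.

End Cells.

Theorem mainTheorem3 (R : realFieldType) (n m : nat) (src tgt : 'I_m -> 'I_n)
  (Gconn : connected_graph src tgt)
  (lam : 'rV[R]_m) (hlam : in_Lambda src tgt lam)
  (hne : exists x, Vcell src tgt 0 x /\ Vcell src tgt lam x) :
  in_affine_codim src tgt
    (fun x => Vcell src tgt 0 x /\ Vcell src tgt lam x) (genus src tgt lam)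
  /\
  (is_facet src tgt (Vcell src tgt 0)
     (fun x => Vcell src tgt 0 x /\ Vcell src tgt lam x) ->
   exists C : seq ('I_m * bool),
     [/\ is_circuit src tgt C,
         forall o, in_supp lam o = (o \in C)
       & lam = xD R C]).
Proof.
have [x0 VVx0] := hne; split.
  have := genus_le_rank_Kmx src tgt lam; have := rank_orth_Kmx src tgt lam => rank_le genus_le.
  have orth_H : (orth_Kmx src tgt lam <= Hmx R src tgt)%MS := capmxSl _ _.
  have [|U /andP[orth_U U_H] rankU] := submx_rank_between
    (k := \rank (Hmx R src tgt) - \rank (orth_Kmx src tgt lam) - genus src tgt lam) orth_H;
    first lia.
  exists x0, U; split=> //; first exact/is_flow_Hmx/VVx0.1.1; first lia.
  by move=> x VVx; apply: submx_trans orth_U; apply: VV_sub_orth_Kmx.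
move=> facet.
have [u [C [uCu uniq_tails suppC C_gt0 lam_C]]] :=
  rank_Kmx_le1_circuit hlam VVx0 (facet_lam_neq0 facet) (facet_rank_Kmx hlam VVx0 facet).
have uniqC := map_uniq uniq_tails.
exists C; split; first exact: is_circuit_closed_walk uCu uniq_tails suppC C_gt0.
  by move=> o; rewrite {1}lam_C (in_supp_chain uniqC suppC).
by rewrite {1}lam_C (chain_xD uniqC suppC).
Qed.
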